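(* Let $q\ge2$, $\mu,R>0$ and $\omega=\min\{1,\mu/4\}$. There is no sequence of $l_i$-shot ID codes for $\Pi^q_{n_i}$, $i=1,2,\dots$, with $n_i\to\infty$, $l_i/n_i^{\omega}\to0$, $M_i\ge 2^{R n_i^{l_i(q-1)}}$ messages, and type-I and type-II error probabilities satisfying $\lambda_{1,i}<n_i^{-\mu}$ and $\lambda_{2,i}<n_i^{-\mu}$ for all $i$.
   Context: Fix an integer $q\ge 2$ and let $\mathcal A_q=\{1,\dots,q\}$. For $n\ge1$ and $\sigma\in S_n$ (the symmetric group on $\{1,\dots,n\}$), $\sigma\mathbf x=(x_{\sigma^{-1}(1)},\dots,x_{\sigma^{-1}(n)})$ for $\mathbf x\in\mathcal A_q^n$. The $n$-block $q$-ary uniform permutation channel $\Pi^q_n$ has input/output alphabet $\mathcal A_q^n$ and $\Pi^q_n(\mathbf y\mid\mathbf x)=\frac1{n!}\sum_{\sigma\in S_n}\mathbf 1\{\mathbf y=\sigma\mathbf x\}$. Using it $l$ times (independently on each block) gives the channel $W^{(l)}$ on $(\mathcal A_q^n)^l$ with $W^{(l)}(\mathbf y^{(1)},\dots,\mathbf y^{(l)}\mid \mathbf x^{(1)},\dots,\mathbf x^{(l)})=\prod_{s=1}^l\Pi^q_n(\mathbf y^{(s)}\mid\mathbf x^{(s)})$. An $l$-shot ID code with $M$ messages for $\Pi^q_n$ (an ''$(n,l,M,\lambda_1,\lambda_2)$ ID code'') is a family $\{(Q_i,\mathcal D_i)\}_{i=1}^M$ with $Q_i$ a probability distribution on $(\mathcal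 A_q^n)^l$ and $\mathcal D_i\subseteq(\mathcal A_q^n)^l$; its error probabilities are $\lambda_{i\to j}=\sum_{\underline{\mathbf x}}Q_i(\underline{\mathbf x})\sum_{\underline{\mathbf y}\in\mathcal D_j}W^{(l)}(\underline{\mathbf y}\mid\underline{\mathbf x})$ ($i\neq j$), $\lambda_{i\not\to i}=\sum_{\underline{\mathbf x}}Q_i(\underline{\mathbf x})\sum_{\underline{\mathbf y}\notin\mathcal D_i}W^{(l)}(\underline{\mathbf y}\mid\underline{\mathbf x})$, type-I error probability $\lambda_1=\max_i\lambda_{i\not\to i}$, type-II error probability $\lambda_2=\max_{i\ne j}\lambda_{i\to j}$. *)

From HB Require Import structures.
From mathcomp Require Import all_boot all_order all_algebra all_fingroup.
From mathcomp Require Import all_classical all_reals all_analysis.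
Set Implicit Arguments. Unset Strict Implicit. Unset Printing Implicit Defensive.
Import Order.TTheory GRing.Theory Num.Theory.
Local Open Scope ring_scope.

(* The alphabet A_q = {1,...,q} is represented by 'I_q = {0,...,q-1}. *)
Definition word (q n : nat) := {ffun 'I_n -> 'I_q}.

Definition permw (q n : nat) (s : 'S_n) (x : word q n) : word q n :=
  [ffun k => x ((s^-1)%g k)].

Definition Pi (R : realType) (q n : nat) (y x : word q n) : R :=
  (n`!%:R)^-1 * \sum_(s : 'S_n) (y == permw s x)%:R.

Definition lword (q n l : nat) := {ffun 'I_l -> word q n}.

Definition Wl (R : realType) (q n l : nat) (y x : lword q n l) : R :=
  \prod_(s < l) Pi R (y s) (x s).

Record IDcode (R : realType) (q n l M : nat) := {
  Qd : 'I_M -> {ffun lword q n l -> R};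
  Dd : 'I_M -> {set lword q n l};
  Qd_ge0 : forall i x, 0 <= Qd i x;
  Qd_sum1 : forall i, \sum_x Qd i x = 1 }.

Definition lam_to (R : realType) q n l M (C : IDcode R q n l M) (i j : 'I_M) : R :=
  \sum_x Qd C i x * \sum_(y in Dd C j) Wl R y x.

Definition lam_not (R : realType) q n l M (C : IDcode R q n l M) (i : 'I_M) : R :=
  \sum_x Qd C i x * \sum_(y in ~: Dd C i) Wl R y x.

Definition lambda1 (R : realType) q n l M (C : IDcode R q n l M) : R :=
  \big[Num.max/0]_(i < M) lam_not C i.

Definition lambda2 (R : realType) q n l M (C : IDcode R q n l M) : R :=
  \big[Num.max/0]_(i < M) \big[Num.max/0]_(j < M | j != i) lam_to C i j.

(* A decoder of [Pi^q_n] only sees outputs up to permutations within each block,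
   so every output distribution is constant on type classes (letter counts per
   block); there are [K = (n+1)^((q-1) l)] types.  Declaring a type good for
   message [i] when at least half of its class lies in [D_i] costs a factor 2 in
   the error probabilities, after which a union bound over [m] independent draws
   shows that when [M (2 eps)^m < (1 - 2 eps)^m] each message has a sample of [m]
   types that is good for it and for no other message.  Distinct messages then
   give distinct nonempty sets of at most [m] types, hence
   [M < sum_(k <= m) C(K, k) <= (e K / m)^m].  For [eps = n^-mu] and [m] just
   above [log M / (mu log n)] the right-hand side stays below [2^(R n^((q-1) l))]
   for large [n] as soon as [l <= n], which is all that is used of
   [l_i / n_i^omega --> 0]. *)

From HB Require Import structures.
From mathcomp Require Import all_boot all_order all_algebra all_fingroup.
From mathcomp Require Import all_classical all_reals all_analysis.
From mathcomp Require Import zify ring lra.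
Import Order.TTheory GRing.Theory Num.Theory.
Set Implicit Arguments. Unset Strict Implicit. Unset Printing Implicit Defensive.
Local Open Scope ring_scope.

Lemma permwM (q n : nat) (s t : 'S_n) (x : word q n) :
  permw s (permw t x) = permw (t * s) x.
Proof. by apply/ffunP => k; rewrite !ffunE invMg permM. Qed.

Lemma permw1 (q n : nat) (x : word q n) : permw 1 x = x.
Proof. by apply/ffunP => k; rewrite !ffunE invg1 perm1. Qed.

Lemma Pi_permw (R : realType) (q n : nat) (s : 'S_n) (y x : word q n) :
  Pi R (permw s y) x = Pi R y x.
Proof.
rewrite /Pi; congr (_ * _); rewrite (reindex_inj (mulIg s)) /=; apply: eq_bigr => t _.
suff -> : (permw s y == permw (t * s) x) = (y == permw t x) by [].
apply/eqP/eqP => [E|->]; last by rewrite permwM.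
by move/(congr1 (permw s^-1)): E; rewrite !permwM mulgV -mulgA mulgV mulg1 !permw1.
Qed.

Lemma Pi_ge0 (R : realType) (q n : nat) (y x : word q n) : 0 <= Pi R y x.
Proof. by rewrite mulr_ge0 ?invr_ge0 ?ler0n ?sumr_ge0. Qed.

Lemma Pi_sum1 (R : realType) (q n : nat) (x : word q n) : \sum_y Pi R y x = 1.
Proof.
rewrite /Pi -mulr_sumr exchange_big /= (eq_bigr (fun _ => 1)) => [|s _].
  by rewrite sumr_const card_Sn mulVf // pnatr_eq0 -lt0n fact_gt0.
by rewrite (bigD1 (permw s x)) //= eqxx big1 ?addr0 // => y /negbTE ->.
Qed.

Lemma Wl_ge0 (R : realType) (q n l : nat) (y x : lword q n l) : 0 <= Wl R y x.
Proof. by apply: prodr_ge0 => s _; apply: Pi_ge0. Qed.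

Lemma Wl_sum1 (R : realType) (q n l : nat) (x : lword q n l) : \sum_y Wl R y x = 1.
Proof.
rewrite /Wl -(bigA_distr_bigA (fun s (w : word q n) => Pi R w (x s))) /=.
by rewrite big1 // => s _; apply: Pi_sum1.
Qed.

Definition letters (q n : nat) (w : word q n) : n.-tuple 'I_q := [tuple w k | k < n].

Lemma permw_of_perm_eq (q n : nat) (w w' : word q n) :
  perm_eq (letters w') (letters w) -> exists s : 'S_n, w' = permw s w.
Proof.
move=> /tuple_permP [s Ew]; exists s^-1%g; apply/ffunP => k; rewrite ffunE invgK.
by have := congr1 (fun t => nth (w' k) t k) Ew; rewrite -!tnth_nth !tnth_mktuple.
Qed.

Lemma sum_count_mem (T : finType) (s : seq T) : (\sum_(a : T) count_mem a s)%N = size s.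
Proof.
elim: s => [|x s IHs] /=; first by rewrite big1.
rewrite big_split /= IHs (bigD1 x) //= eqxx big1 // => a.
by rewrite eq_sym => /negbTE ->.
Qed.

(* The count of the last letter is determined by the others, so a type only
   records the counts of the first [p] letters: there are [(n+1)^p] types. *)
Definition wtype (p n : nat) (w : word p.+1 n) : {ffun 'I_p -> 'I_n.+1} :=
  [ffun a => inord (count_mem (widen_ord (leqnSn p) a) (letters w))].

Lemma perm_eq_wtype (p n : nat) (w w' : word p.+1 n) :
  wtype w = wtype w' -> perm_eq (letters w) (letters w').
Proof.
move=> Ew; apply/allP => a _; apply/eqP.
have count_lt (v : word p.+1 n) b : (count_mem b (letters v) < n.+1)%N.
  by rewrite ltnS -[X in (_ <= X)%N](size_tuple (letters v)) count_size.
have Ewiden b : count_mem (widen_ord (leqnSn p) b) (letters w) =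
                count_mem (widen_ord (leqnSn p) b) (letters w').
  move/ffunP/(_ b)/(congr1 val): Ew.
  by rewrite !ffunE /= !inordK ?count_lt.
have [b ->|->] := unliftP ord_max a.
  suff -> : lift ord_max b = widen_ord (leqnSn p) b by [].
  by apply/val_inj; rewrite /= /bump leqNgt ltn_ord.
have sum_eq : (\sum_b count_mem b (letters w) = \sum_b count_mem b (letters w'))%N.
  by rewrite !sum_count_mem !size_tuple.
by move: sum_eq; rewrite !big_ord_recr /= (eq_bigr _ (fun b _ => Ewiden b)) => /addnI.
Qed.

Definition ltype (p n l : nat) (y : lword p.+1 n l) : {ffun 'I_l -> {ffun 'I_p -> 'I_n.+1}} :=
  [ffun s => wtype (y s)].

Lemma Wl_ltype (R : realType) (p n l : nat) (y y' x : lword p.+1 n l) :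
  ltype y = ltype y' -> Wl R y x = Wl R y' x.
Proof.
move=> Ey; apply: eq_bigr => s _.
have /perm_eq_wtype/permw_of_perm_eq[t ->] : wtype (y s) = wtype (y' s).
  by move/ffunP/(_ s): Ey; rewrite !ffunE.
exact: Pi_permw.
Qed.

Section OutputDistribution.
Variables (R : realType) (q n l M : nat) (C : IDcode R q n l M).

Definition out_prob (i : 'I_M) (y : lword q n l) : R := \sum_x Qd C i x * Wl R y x.

Lemma out_prob_ge0 i y : 0 <= out_prob i y.
Proof. by apply: sumr_ge0 => x _; rewrite mulr_ge0 ?Qd_ge0 ?Wl_ge0. Qed.

Lemma out_prob_sum1 i : \sum_y out_prob i y = 1.
Proof.
rewrite exchange_big /= -(Qd_sum1 C i); apply: eq_bigr => x _.
by rewrite -mulr_sumr Wl_sum1 mulr1.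
Qed.

Lemma out_prob_sum (i : 'I_M) (D : {set lword q n l}) :
  \sum_(y in D) out_prob i y = \sum_x Qd C i x * \sum_(y in D) Wl R y x.
Proof. by rewrite exchange_big; apply: eq_bigr => x _; rewrite mulr_sumr. Qed.

Lemma out_prob_compl_le_lambda1 i : \sum_(y in ~: Dd C i) out_prob i y <= lambda1 C.
Proof. by rewrite out_prob_sum; apply: (le_bigmax _ (lam_not C)). Qed.

Lemma out_prob_other_le_lambda2 i j : j != i -> \sum_(y in Dd C j) out_prob i y <= lambda2 C.
Proof.
move=> ji; rewrite out_prob_sum; apply: le_trans (le_bigmax _ _ i).
exact: (le_bigmax_cond _ (lam_to C i) ji).
Qed.

End OutputDistribution.

Lemma out_prob_ltype (R : realType) (p n l M : nat) (C : IDcode R p.+1 n l M) i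
    (y y' : lword p.+1 n l) :
  ltype y = ltype y' -> out_prob C i y = out_prob C i y'.
Proof. by move=> Ey; apply: eq_bigr => x _; rewrite (Wl_ltype _ x Ey). Qed.

Definition fiber (T U : finType) (tau : T -> U) (o : U) : {set T} := [set y | tau y == o].

Definition majority (T U : finType) (tau : T -> U) (E : {set T}) : {set U} :=
  [set o | (#|fiber tau o| <= 2 * #|fiber tau o :&: E|)%N].

Lemma majority_compl (T U : finType) (tau : T -> U) (E : {set T}) (o : U) :
  o \notin majority tau E -> o \in majority tau (~: E).
Proof.
by rewrite !inE -ltnNge; have := cardsID E (fiber tau o); rewrite finset.setDE; lia.
Qed.

Section Pushforward.
Variables (R : realType) (T U : finType) (tau : T -> U) (F : T -> R).
Hypothesis F_ge0 : forall y, 0 <= F y.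
Hypothesis F_fiber : forall y y', tau y = tau y' -> F y = F y'.

Definition pushforward (o : U) : R := \sum_(y in fiber tau o) F y.

Lemma pushforward_ge0 o : 0 <= pushforward o.
Proof. exact: sumr_ge0. Qed.

Lemma sum_by_fiber (E : {set T}) :
  \sum_(y in E) F y = \sum_o \sum_(y in fiber tau o :&: E) F y.
Proof.
rewrite (partition_big tau predT) //; apply: eq_bigr => o _.
by apply: eq_bigl => y; rewrite !inE andbC.
Qed.

Lemma sum_pushforward : \sum_o pushforward o = \sum_y F y.
Proof.
rewrite [RHS](partition_big tau predT) //; apply: eq_bigr => o _.
by apply: eq_bigl => y; rewrite inE.
Qed.

Lemma pushforward_majority_le (E : {set T}) o : o \in majority tau E ->
  pushforward o <= 2 * \sum_(y in fiber tau o :&: E) F y.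
Proof.
rewrite inE => half.
have [fib0|[y0 y0o]] := set_0Vmem (fiber tau o).
  by rewrite /pushforward fib0 big_set0 mulr_ge0 ?sumr_ge0.
have Fo y : y \in fiber tau o -> F y = F y0.
  by move: y0o; rewrite !inE => /eqP E0 /eqP Ey; apply: F_fiber; rewrite Ey E0.
have FoE y : y \in fiber tau o :&: E -> F y = F y0 by case/setIP => /Fo.
rewrite /pushforward (eq_bigr _ Fo) (eq_bigr _ FoE).
by rewrite !sumr_const mulrnAr mulr_natl -mulrnA; apply: ler_wpMn2l.
Qed.

Lemma sum_pushforward_majority_le (E : {set T}) :
  \sum_(o in majority tau E) pushforward o <= 2 * \sum_(y in E) F y.
Proof.
rewrite (sum_by_fiber E) mulr_sumr.
apply: (@le_trans _ _ (\sum_(o in majority tau E) 2 * \sum_(y in fiber tau o :&: E) F y)).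
  by apply: ler_sum => o; apply: pushforward_majority_le.
rewrite [leRHS](bigID (mem (majority tau E))) /= lerDl.
by apply: sumr_ge0 => o _; rewrite mulr_ge0 ?sumr_ge0.
Qed.

Lemma sum_pushforward_majority_ge (E : {set T}) :
  \sum_y F y - 2 * \sum_(y in ~: E) F y <= \sum_(o in majority tau E) pushforward o.
Proof.
have outside_le : \sum_(o | o \notin majority tau E) pushforward o <=
                  \sum_(o in majority tau (~: E)) pushforward o.
  rewrite [leRHS](bigID (fun o => o \notin majority tau E)) /= -[leLHS]addr0.
  apply: lerD; last by apply: sumr_ge0 => o _; apply: pushforward_ge0.
  rewrite le_eqVlt; apply/orP; left; apply/eqP/eq_bigl => o.
  by rewrite andb_idl //; apply: majority_compl.
rewrite -sum_pushforward (bigID (mem (majority tau E))) /= -addrA gerDl subr_le0.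
exact: le_trans outside_le (sum_pushforward_majority_le _).
Qed.

End Pushforward.

Lemma sum_ffun_prod_restrict (R : comPzSemiRingType) (U : finType) (m : nat)
    (g : U -> R) (A : {set U}) :
  \sum_(T : {ffun 'I_m -> U}) \prod_k (if T k \in A then g (T k) else 0) =
  (\sum_(o in A) g o) ^+ m.
Proof.
rewrite -(bigA_distr_bigA (fun (k : 'I_m) o => if o \in A then g o else 0)) /=.
by rewrite prodr_const card_ord -big_mkcond.
Qed.

Lemma card_small_sets (U : finType) (m : nat) :
  #|[set S : {set U} | (#|S| <= m)%N]| = (\sum_(k < m.+1) 'C(#|U|, k))%N.
Proof.
rewrite -sum1_card (partition_big (fun S : {set U} => (inord #|S| : 'I_m.+1)) predT) //=.
apply: eq_bigr => k _; rewrite -card_draws sum1_card; apply: eq_card => S.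
rewrite unfold_in /= !inE; case: (leqP #|S| m) => small /=.
  by apply/eqP/eqP => [<-|->]; [rewrite inordK | apply/val_inj; rewrite /= inordK].
by apply/esym/negbTE/eqP => Sk; move: small; rewrite Sk ltnNge -ltnS ltn_ord.
Qed.

Section SeparatingSample.
Variables (R : realType) (U : finType) (M m : nat).
Variables (f : 'I_M -> U -> R) (B : 'I_M -> {set U}) (d : R).
Hypothesis f_ge0 : forall i o, 0 <= f i o.
Hypothesis d_ge0 : 0 <= d.
Hypothesis d_le1 : d <= 1.
Hypothesis mass_own : forall i, 1 - d <= \sum_(o in B i) f i o.
Hypothesis mass_other : forall i j, j != i -> \sum_(o in B j) f i o <= d.
Hypothesis sample_error : M%:R * d ^+ m < (1 - d) ^+ m.

(* A sample of [m] independent draws from [f i] lands in [B i] with probability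
   at least [(1 - d)^m], and inside a fixed [B j], [j != i], with probability at
   most [d^m]; a union bound leaves room for a sample inside [B i] only. *)
Lemma separating_sample i : exists T : {ffun 'I_m -> U},
  (forall k, T k \in B i) /\ (forall j, j != i -> exists k, T k \notin B j).
Proof.
pose w (A : {set U}) (T : {ffun 'I_m -> U}) :=
  \prod_k (if T k \in A then f i (T k) else 0).
have w_ge0 A T : 0 <= w A T by apply: prodr_ge0 => k _; case: ifP.
have w_inside (A : {set U}) (T : {ffun 'I_m -> U}) :
    (forall k, T k \in A) -> w A T = \prod_k f i (T k).
  by move=> TA; apply: eq_bigr => k _; rewrite TA.
have mass_ge0 j : 0 <= \sum_(o in B j) f i o by apply: sumr_ge0 => o _.
apply/not_existsP => no_sample.
have w_le T : w (B i) T <= \sum_(j | j != i) w (B j) T.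
  have [TB|] := pselect (forall k, T k \in B i); last first.
    move=> /existsNP[k /negP/negbTE TBk].
    by rewrite {1}/w (bigD1 k) //= TBk mul0r; apply: sumr_ge0 => *; apply: w_ge0.
  have /not_andP[/(_ TB)[]|/existsNP[j /not_implyP[ji /forallNP TBj]]] := no_sample T.
  rewrite (bigD1 j) //= (w_inside (B i)) // (w_inside (B j)) => [|k]; last first.
    by apply/negbNE/negP => /(TBj k).
  by rewrite lerDl; apply: sumr_ge0 => *; apply: w_ge0.
have mass_le :
    (\sum_(o in B i) f i o) ^+ m <= \sum_(j | j != i) (\sum_(o in B j) f i o) ^+ m.
  rewrite -sum_ffun_prod_restrict.
  under [leRHS]eq_bigr => j _ do rewrite -sum_ffun_prod_restrict.
  by rewrite exchange_big; apply: ler_sum => T _; apply: w_le.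
suff : (1 - d) ^+ m <= M%:R * d ^+ m by rewrite leNgt sample_error.
apply: le_trans (le_trans (lerXn2r _ _ _ (mass_own i)) mass_le) _;
  rewrite ?nnegrE ?subr_ge0 //.
apply: (@le_trans _ _ (\sum_(j | j != i) d ^+ m)).
  apply: ler_sum => j ji; apply: lerXn2r; rewrite ?nnegrE //; exact: mass_other.
rewrite sumr_const mulr_natl; apply: ler_wpMn2l; first exact: exprn_ge0.
by apply: leq_trans (max_card _) _; rewrite card_ord.
Qed.

(* The sample supports are pairwise distinct nonempty sets of at most [m] points. *)
Lemma sample_count_lt : (0 < m)%N -> (M < \sum_(k < m.+1) 'C(#|U|, k))%N.
Proof.
move=> m_gt0.
have [T T_sep] := fin_all_exists separating_sample.
pose S i := [set T i k | k : 'I_m].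
have S_sub i j : (S i \subset B j) = (j == i).
  have [-> | ji] := eqVneq j i.
    by apply/fintype.subsetP => _ /imsetP[k _ ->]; have [] := T_sep i.
  have [_ /(_ j ji)[k Tk]] := T_sep i.
  by apply/negbTE/fintype.subsetPn; exists (T i k); rewrite ?imset_f.
have S_inj : injective S by move=> i j Sij; apply/eqP; rewrite -S_sub -Sij S_sub.
rewrite -card_small_sets -[M]card_ord -cardsT -(card_imset _ S_inj).
apply/proper_card/properP; split.
  apply/fintype.subsetP => _ /imsetP[i _ ->]; rewrite inE.
  by apply: leq_trans (leq_imset_card _ _) _; rewrite card_ord.
exists finset.set0; first by rewrite inE cards0.
apply/imsetP => -[i _ S0]; suff : T i (Ordinal m_gt0) \in finset.set0 by rewrite inE.
by rewrite S0 imset_f.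
Qed.

End SeparatingSample.

Lemma sum_binomial_le (R : realType) (K m : nat) : (0 < m)%N -> (m <= K)%N ->
  (\sum_(k < m.+1) 'C(K, k))%:R <= expR (m%:R : R) * (K%:R / m%:R) ^+ m.
Proof.
move=> m_gt0 le_mK.
have K_gt0 : (0 < K)%N by apply: leq_trans le_mK.
pose x : R := m%:R / K%:R.
have x_gt0 : 0 < x by rewrite divr_gt0 ?ltr0n.
have x_le1 : x <= 1 by rewrite ler_pdivrMr ?ltr0n // mul1r ler_nat.
have Kx : K%:R * x = m%:R by rewrite /x mulrCA divff ?mulr1 // pnatr_eq0 -lt0n.
have scaled_le : x ^+ m * (\sum_(k < m.+1) 'C(K, k))%:R <= expR (m%:R : R).
  rewrite natr_sum mulr_sumr.
  apply: (@le_trans _ _ (\sum_(k < m.+1) x ^+ k *+ 'C(K, k))).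
    apply: ler_sum => k _; rewrite mulr_natr; apply: ler_wMn2r.
    by apply: ler_wiXn2l; [exact: ltW | exact: x_le1 | rewrite -ltnS].
  apply: (@le_trans _ _ (\sum_(k < K.+1) x ^+ k *+ 'C(K, k))).
    rewrite (big_ord_widen K.+1 (fun k => x ^+ k *+ 'C(K, k))) ?ltnS //.
    rewrite [leRHS](bigID (fun k : 'I_K.+1 => (k < m.+1)%N)) /= lerDl.
    by apply: sumr_ge0 => k _; rewrite mulrn_wge0 // exprn_ge0 // ltW.
  rewrite -exprD1n -Kx expRM_natl.
  by apply: lerXn2r; rewrite ?nnegrE ?addr_ge0 ?expR_ge0 ?(ltW x_gt0) // addrC expR_ge1Dx.
rewrite -(ler_pM2l (exprn_gt0 m x_gt0)) [leRHS]mulrCA -exprMn.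
have -> : x * (K%:R / m%:R) = 1.
  by rewrite /x -invf_div mulVf // lt0r_neq0 // divr_gt0 ?ltr0n.
by rewrite expr1n mulr1.
Qed.

Lemma IDcode_converse (R : realType) (p n l M : nat) (C : IDcode R p.+1 n l M)
    (d : R) (M' m : nat) :
  0 <= d -> d <= 1 -> 2 * lambda1 C <= d -> 2 * lambda2 C <= d ->
  (M' <= M)%N -> (0 < m)%N -> M'%:R * d ^+ m < (1 - d) ^+ m ->
  (M' < \sum_(k < m.+1) 'C((n.+1 ^ p) ^ l, k))%N.
Proof.
move=> d_ge0 d_le1 lam1_le lam2_le le_M'M m_gt0 sample_err.
pose msg (j : 'I_M') := widen_ord le_M'M j.
pose f j := pushforward (@ltype p n l) (out_prob C (msg j)).
pose B j := majority (@ltype p n l) (Dd C (msg j)).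
have -> : ((n.+1 ^ p) ^ l = #|{ffun 'I_l -> {ffun 'I_p -> 'I_n.+1}}|)%N.
  by rewrite !card_ffun !card_ord.
apply: (@sample_count_lt R _ M' m f B d) => // [j o|j|j j' j'j].
- by rewrite /f; apply: pushforward_ge0 => y; apply: out_prob_ge0.
- rewrite /f /B.
  apply: le_trans (sum_pushforward_majority_ge (out_prob_ge0 C _) (out_prob_ltype C _) _).
  rewrite out_prob_sum1 lerD2l lerN2; apply: le_trans lam1_le.
  by rewrite ler_pM2l // out_prob_compl_le_lambda1.
- rewrite /f /B.
  apply: le_trans (sum_pushforward_majority_le (out_prob_ge0 C _) (out_prob_ltype C _) _) _.
  by apply: le_trans lam2_le; rewrite ler_pM2l // out_prob_other_le_lambda2.
Qed.

Lemma ln_le_tangent (R : realType) (x k : R) :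
  0 < x -> 0 < k -> ln x <= x / k + ln k - 1.
Proof.
move=> x_gt0 k_gt0.
have : ln (1 + (x / k - 1)) <= x / k - 1.
  apply: le_ln1Dx; have : 0 < x / k by rewrite divr_gt0.
  lra.
by rewrite addrCA subrr addr0 ln_div ?posrE //; lra.
Qed.

Definition sample_size (R : realType) (A L : R) : nat := (Num.truncn (A / L)).+1.

Lemma sample_size_gt (R : realType) (A L : R) : 1 <= L -> A < (sample_size A L)%:R * L.
Proof. by move=> L_ge1; rewrite -ltr_pdivrMr; [apply: truncnS_gt | lra]. Qed.

Lemma sample_size_le (R : realType) (A L : R) : 1 <= L -> L <= A ->
  (sample_size A L)%:R <= 2 * (A / L).
Proof.
move=> L_ge1 L_le_A.
have AL_ge1 : 1 <= A / L by rewrite ler_pdivlMr ?mul1r //; lra.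
have : (Num.truncn (A / L))%:R <= A / L by rewrite truncn_le; lra.
by rewrite /sample_size -natr1; lra.
Qed.

(* Since [m > A / L], [ln (K / m) <= c + ln L]; the assumption on [L] makes
   [1 + c + ln L <= L / 2], and [m <= 2 A / L] finishes. *)
Lemma sample_size_entropy (R : realType) (A L c K : R) :
  1 <= L -> L <= A -> 0 <= c -> 4 * (ln 4 + c) <= L -> 0 < K -> ln K <= ln A + c ->
  (sample_size A L)%:R + (sample_size A L)%:R * (ln K - ln (sample_size A L)%:R) <= A.
Proof.
move=> L_ge1 L_le_A c_ge0 L_large K_gt0 lnK_le; set m : R := (sample_size A L)%:R.
have L_gt0 : 0 < L by lra.
have A_gt0 : 0 < A by lra.
have m_gt0 : 0 < m by rewrite ltr0n.
have ln_m : ln A - ln L <= ln m.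
  rewrite -ln_div ?posrE // ler_ln ?posrE ?divr_gt0 // ltW // ltr_pdivrMr //.
  exact: sample_size_gt.
have lnL_ge0 : 0 <= ln L by apply: ln_ge0; lra.
have lnL_le : ln L <= L / 4 + ln 4 - 1 by apply: ln_le_tangent; lra.
have entropy_le : m + m * (ln K - ln m) <= m * (1 + c + ln L).
  by rewrite -[X in X + _]mulr1 -mulrDr ler_pM2l //; lra.
apply: (le_trans entropy_le); apply: le_trans (_ : 2 * (A / L) * (1 + c + ln L) <= A).
  by rewrite ler_pM2r ?sample_size_le //; lra.
have -> : 2 * (A / L) * (1 + c + ln L) = A / L * (2 * (1 + c + ln L)) by ring.
rewrite -[leRHS](divfK (lt0r_neq0 L_gt0)) ler_pM2l ?divr_gt0 //; lra.
Qed.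

Lemma sample_error_lt (R : realType) (A L : R) (m : nat) : 0 <= L -> A < m%:R * L ->
  expR A * (expR (- L) / 2) ^+ m < (1 - expR (- L) / 2) ^+ m.
Proof.
move=> L_ge0 A_lt.
have u_le1 : expR (- L) <= 1 by rewrite -expR0 ler_expR; lra.
have u_gt0 := expR_gt0 (- L).
rewrite exprMn mulrA -expRM_natl -expRD mulrN.
have half_le : 2^-1 ^+ m <= (1 - expR (- L) / 2) ^+ m :> R.
  by apply: lerXn2r; rewrite ?nnegrE; lra.
apply: lt_le_trans half_le; rewrite -[ltRHS]mul1r ltr_pM2r ?exprn_gt0 ?invr_gt0 //.
by rewrite -[ltRHS]expR0 ltr_expR; lra.
Qed.

Definition error_exponent (R : realType) (mu x : R) : R := mu * ln x - ln 4.

Lemma twice_powR_error (R : realType) (mu x : R) : 0 < x ->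
  2 * x `^ (- mu) = expR (- error_exponent mu x) / 2.
Proof.
move=> x_gt0; rewrite /powR gt_eqF // /error_exponent opprB expRD lnK ?posrE //.
by rewrite mulNr; lra.
Qed.

Lemma ln_card_types_le (R : realType) (n l p : nat) : (0 < n)%N -> (l <= n)%N ->
  ln (((n.+1 ^ p) ^ l)%:R : R) <= ln (n%:R ^+ (l * p)) + p%:R.
Proof.
move=> n_gt0 le_ln.
have nr_gt0 : (0 : R) < n%:R by rewrite ltr0n.
have ln_succ : ln (n%:R + 1) <= ln n%:R + n%:R^-1 :> R.
  have inv_gt0 : (0 : R) < n%:R^-1 by rewrite invr_gt0.
  have : ln (1 + n%:R^-1) <= n%:R^-1 :> R by apply: le_ln1Dx; lra.
  have -> : 1 + n%:R^-1 = (n%:R + 1) / n%:R :> R.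
    by rewrite mulrDl divff ?mul1r // lt0r_neq0.
  by rewrite ln_div ?posrE ?addr_gt0 //; lra.
have frac_le : n%:R^-1 *+ (l * p) <= p%:R :> R.
  rewrite mulrnA; apply: ler_wMn2r.
  by rewrite -[_ *+ l]mulr_natl ler_pdivrMr // mul1r ler_nat.
rewrite -expnM mulnC natrX -natr1 !lnXn ?addr_gt0 //.
by apply: le_trans (ler_wMn2r (l * p) ln_succ) _; rewrite mulrnDl lerD2l.
Qed.

Lemma powR2_expR (R : realType) (y : R) : 2 `^ y = expR (y * ln 2).
Proof. by rewrite /powR gt_eqF. Qed.

Definition large_blocklength (R : realType) (mu r : R) (p : nat) (x : R) : Prop :=
  [/\ 1 <= x, mu * ln x <= r * x, 1 <= error_exponent mu x,
      2 * r <= error_exponent mu x & 4 * (ln 4 + (p%:R + `|ln r|)) <= error_exponent mu x].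

Lemma large_blocklength_near (R : realType) (mu r : R) (p : nat) :
  0 < mu -> 0 < r -> \forall x \near +oo, large_blocklength mu r p x.
Proof.
move=> mu_gt0 r_gt0.
pose k := 2 * mu / r.
have k_gt0 : 0 < k by rewrite divr_gt0 ?mulr_gt0.
pose Lmin := Num.max 1 (Num.max (2 * r) (4 * (ln 4 + (p%:R + `|ln r|)))).
near=> x.
have x_ge1 : 1 <= x by near: x; apply: nbhs_pinfty_ge; rewrite num_real.
have x_gt0 : 0 < x by lra.
have : Lmin <= error_exponent mu x.
  have : expR ((Lmin + ln 4) / mu) <= x by near: x; apply: nbhs_pinfty_ge; rewrite num_real.
  rewrite -ler_ln ?posrE ?expR_gt0 // expRK ler_pdivrMr // /error_exponent.
  lra.
rewrite !ge_max => /and3P[L_ge1 L_ge2r L_large]; split => //.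
have scale : mu * (x / k) = r * x / 2 by rewrite /k; field; rewrite ?gt_eqF.
have : 2 * mu * `|ln k| / r <= x by near: x; apply: nbhs_pinfty_ge; rewrite num_real.
rewrite ler_pdivrMr // => x_large.
have tangent : mu * ln x <= mu * (x / k + ln k - 1) by rewrite ler_pM2l // ln_le_tangent.
have : mu * ln k <= mu * `|ln k| by rewrite ler_pM2l // ler_norm.
rewrite !mulrDr mulrN1 scale in tangent; lra.
Unshelve. all: by end_near.
Qed.

Section LargeBlocklength.
Variables (R : realType) (mu r : R) (p n l : nat).
Hypotheses (r_gt0 : 0 < r) (p_gt0 : (0 < p)%N).
Hypothesis n_large : large_blocklength mu r p n%:R.
Hypotheses (l_gt0 : (0 < l)%N) (l_le_n : (l <= n)%N).

Local Notation N := (n%:R ^+ (l * p) : R).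
Local Notation A := (r * N).
Local Notation L := (error_exponent mu n%:R).
Local Notation K := ((n.+1 ^ p) ^ l)%N.
Local Notation m := (sample_size A L).

Lemma n_le_volume : n%:R <= N.
Proof.
have [n_ge1 _ _ _ _] := n_large.
by rewrite -[leLHS]expr1; apply: ler_weXn2l; rewrite // muln_gt0 l_gt0.
Qed.

Lemma error_exponent_le : L <= A.
Proof.
have [_ lin _ _ _] := n_large.
apply: le_trans (_ : r * n%:R <= A); last by rewrite ler_pM2l ?n_le_volume.
have : 0 <= ln 4 :> R by rewrite ln_ge0 // ler1n.
rewrite /error_exponent; lra.
Qed.

Lemma sample_size_le_types : (m <= K)%N.
Proof.
have [n_ge1 _ L_ge1 L_ge2r _] := n_large.
have N_ge1 : 1 <= N by apply: le_trans n_le_volume.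
rewrite -(ler_nat R); apply: le_trans (sample_size_le L_ge1 error_exponent_le) _.
apply: (@le_trans _ _ N).
  by rewrite mulrA ler_pdivrMr; nra.
by rewrite -expnM mulnC natrX -natr1; apply: lerXn2r; rewrite ?nnegrE; lra.
Qed.

Lemma sum_binomial_le_rate : (\sum_(k < m.+1) 'C(K, k))%:R <= expR A.
Proof.
have [n_ge1 _ L_ge1 _ L_large] := n_large.
have n_gt0 : (0 < n)%N by rewrite -(ltr0n R); lra.
have N_gt0 : 0 < N by apply: lt_le_trans n_le_volume; lra.
have K_gt0 : (0 : R) < K%:R by rewrite ltr0n !expn_gt0.
have m_gt0 : (0 : R) < m%:R by rewrite ltr0n.
apply: le_trans (sum_binomial_le R (ltn0Sn _) sample_size_le_types) _.
have -> : (K%:R / m%:R) ^+ m = expR (m%:R * ln (K%:R / m%:R)) :> R.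
  by rewrite expRM_natl lnK // posrE divr_gt0.
rewrite -expRD ler_expR ln_div ?posrE //.
have c_ge0 : 0 <= p%:R + `|ln r| :> R by rewrite addr_ge0.
apply: (sample_size_entropy L_ge1 error_exponent_le c_ge0 L_large) => //.
have := @ln_card_types_le R n l p n_gt0 l_le_n.
have : - ln r <= `|ln r| by rewrite -normrN ler_norm.
rewrite lnM ?posrE //; lra.
Qed.

End LargeBlocklength.

Lemma IDcode_card_lt (R : realType) (p : nat) (mu Rate : R) (n l M : nat)
    (C : IDcode R p.+1 n l M) :
  (0 < p)%N -> 0 < mu -> 0 < Rate -> large_blocklength mu (Rate * ln 2) p n%:R ->
  (l <= n)%N -> lambda1 C < n%:R `^ (- mu) -> lambda2 C < n%:R `^ (- mu) ->
  M%:R < 2 `^ (Rate * n%:R ^+ (l * p)).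
Proof.
move=> p_gt0 mu_gt0 Rate_gt0 n_large l_le_n lam1 lam2.
have r_gt0 : 0 < Rate * ln 2 by rewrite mulr_gt0 // ln_gt0 // ltr1n.
have [n_ge1 _ L_ge1 _ _] := n_large.
set L := error_exponent mu n%:R in L_ge1.
set d := expR (- L) / 2.
have d_eq : 2 * n%:R `^ (- mu) = d by apply: twice_powR_error; lra.
have d_ge0 : 0 <= d by rewrite divr_ge0 ?expR_ge0.
have d_le : d <= 4^-1.
  have e_ge2 : 2 <= expR L by apply: le_trans (expR_ge1Dx L); lra.
  have : (expR L)^-1 <= 2^-1 by rewrite lef_pV2 ?posrE ?expR_gt0.
  rewrite /d expRN; lra.
have d_le1 : d <= 1 by lra.
have lam1_le : 2 * lambda1 C <= d by lra.
have lam2_le : 2 * lambda2 C <= d by lra.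
rewrite ltNge powR2_expR mulrAC; apply/negP => M_ge.
have [l0|l_gt0] := posnP l.
  have M_ge2 : (2 <= M)%N.
    rewrite -(ltr_nat R); apply: lt_le_trans M_ge.
    by rewrite l0 mul0n expr0 mulr1 -[ltLHS]expR0 ltr_expR.
  have : (2 < \sum_(k < 2) 'C((n.+1 ^ p) ^ l, k))%N.
    by apply: (IDcode_converse d_ge0 d_le1 lam1_le lam2_le M_ge2) => //; rewrite expr1; lra.
  by rewrite l0 expn0 !big_ord_recr big_ord0.
set A := Rate * ln 2 * n%:R ^+ (l * p) in M_ge.
pose M' := Num.truncn (expR A).
have M'_le : (M' <= M)%N.
  by rewrite -(ler_nat R); apply: le_trans M_ge; rewrite truncn_le expR_ge0.
have err : M'%:R * d ^+ sample_size A L < (1 - d) ^+ sample_size A L.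
  apply: le_lt_trans (sample_error_lt (ltW (lt_le_trans ltr01 L_ge1)) (sample_size_gt A L_ge1)).
  by rewrite ler_pM2r ?exprn_gt0 ?divr_gt0 ?expR_gt0 // truncn_le expR_ge0.
have := IDcode_converse d_ge0 d_le1 lam1_le lam2_le M'_le (ltn0Sn _) err.
by rewrite ltnNge truncn_ge_nat ?expR_ge0 // sum_binomial_le_rate.
Qed.

Lemma ltr_of_div_powR_lt1 (R : realType) (x y w : R) :
  1 <= x -> w <= 1 -> y / x `^ w < 1 -> y < x.
Proof.
move=> x_ge1 w_le1.
have pow_gt0 : 0 < x `^ w by apply: powR_gt0; lra.
by rewrite ltr_pdivrMr // mul1r => /lt_le_trans; apply; apply: ler1_powR.
Qed.

Local Open Scope classical_set_scope.

Theorem theorem2 (R : realType) (q : nat) (mu Rate : R) :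
  (2 <= q)%N -> 0 < mu -> 0 < Rate ->
  let omega := Num.min 1 (mu / 4) in
  ~ exists (n l M : nat -> nat) (C : forall i, IDcode R q (n i) (l i) (M i)),
    [/\ (fun i => (n i)%:R : R) @ \oo --> +oo,
        (fun i => (l i)%:R / (n i)%:R `^ omega : R) @ \oo --> 0%R,
        forall i, 2 `^ (Rate * (n i)%:R ^+ (l i * (q - 1))) <= (M i)%:R,
        forall i, lambda1 (C i) < (n i)%:R `^ (- mu)
      & forall i, lambda2 (C i) < (n i)%:R `^ (- mu)].
Proof.
move=> q_ge2 mu_gt0 Rate_gt0 omega [n [l [M [C [n_oo l_small M_ge lam1 lam2]]]]].
case: q q_ge2 C M_ge lam1 lam2 => [//|p] p_gt0 C M_ge lam1 lam2.
have r_gt0 : 0 < Rate * ln 2 by rewrite mulr_gt0 // ln_gt0 // ltr1n.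
have eventually : \forall i \near \oo,
    large_blocklength mu (Rate * ln 2) p (n i)%:R /\ (l i)%:R / (n i)%:R `^ omega < 1.
  near=> i; split.
    by near: i; apply: n_oo; apply: large_blocklength_near.
  by apply: le_lt_trans (ler_norm _) _; near: i; apply: (cvgr0_norm_lt _ l_small _ ltr01).
have [i [n_large l_lt]] := filter_ex eventually.
have [n_ge1 _ _ _ _] := n_large.
have l_le_n : (l i <= n i)%N.
  rewrite -(ler_nat R) ltW //; apply: ltr_of_div_powR_lt1 n_ge1 _ l_lt.
  by rewrite /omega ge_min lexx.
have := IDcode_card_lt p_gt0 mu_gt0 Rate_gt0 n_large l_le_n (lam1 i) (lam2 i).
by rewrite ltNge; move: (M_ge i); rewrite subn1 /= => ->.
Unshelve. all: by end_near.
Qed.
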